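(* Assume Assumptions 1, 2 and 3 (see context) hold, let $T\ge 1$ and let $(\eta_t)_{t\ge1}$ be a non-increasing sequence of positive step sizes used by SMD. Fix $\delta\in(0,1)$. Let $Y_1,Y_2$ be positive numbers (which may depend on $\delta$ and on $(\eta_t)_{t=1}^T$) such that, with $$\gamma=\sqrt{Y_2+\sum_{t=1}^T\eta_t^2\,(G^2+\sigma^2)}$$ and $$D_t=\max\Big\{\gamma,\sqrt{B_\psi(x^*,x_1)},\dots,\sqrt{B_\psi(x^*,x_t)}\Big\},\qquad t\ge1,$$ it holds that $$P\Big(\max_{s\le T}\sum_{t=1}^s\eta_t\Big\langle \xi_t,\frac{x_t-x^*}{\sqrt2\,D_t}\Big\rangle>Y_1\Big)\le\frac\delta2\quad\text{and}\quad P\Big(\sum_{t=1}^T\eta_t^2\big(\|\xi_t\|_*^2-\mathbb E_t\|\xi_t\|_*^2\big)>Y_2\Big)\le\frac\delta2 .$$ Then, with probability at least $1-\delta$, the average iterate $\bar x_T=\frac1T\sum_{t=1}^Tx_t$ satisfies $$f(\bar x_T)-f^*\le\frac{3}{\eta_T T}\Big(B_\psi(x^*,x_1)+\sum_{t=1}^T\eta_t^2(G^2+\sigma^2)+2Y_1^2+Y_2\Big).$$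
   Context: Let $\|\cdot\|$ be a norm on $\mathbb R^d$ with dual norm $\|y\|_*=\sup_{\|w\|\le1}\langle y,w\rangle$. Let $\mathcal X\subseteq\mathbb R^d$ be nonempty, closed and convex, and $f:\mathcal X\to\mathbb R$ convex with a minimizer $x^*\in\mathcal X$, $f^*=f(x^* )$; $\partial f(x)$ is the subdifferential. Assumption 1: the regularizer $\psi:\mathbb R^d\to(-\infty,+\infty]$ is closed, convex, differentiable on $\mathrm{int}(\mathrm{dom}\,\psi)\neq\emptyset$ (where $\mathrm{dom}\,\psi=\{\psi<\infty\}$), $1$-strongly convex w.r.t. $\|\cdot\|$ (i.e. $\psi(x)\ge\psi(y)+\langle x-y,g\rangle+\frac12\|x-y\|^2$ for $x,y\in\mathrm{dom}\,\psi$, $g\in\partial\psi(y)$), $\mathcal X\subseteq\mathrm{dom}\,\psi$, and either $\|\nabla\psi(y_k)\|_2\to\infty$ for every sequence $(y_k)$ in $\mathrm{int}\,\mathrm{dom}\,\psi$ converging to a boundary point of $\mathrm{dom}\,\psi$, or $\mathcal X\subseteq\mathrm{int}\,\mathrm{dom}\,\psi$. The Bregman divergence is $B_\psi(x,y)=\psi(x)-\psi(y)-\langle x-y,\nabla\psi(y)\rangle$. Stochastic Mirror Descent (SMD) with non-increasing positive step sizes $(\eta_t)$: pick $x_1\in\mathrm{int}\,\mathrm{dom}\,\psi$; at step $t$ the oracle returns $\hat g_t=g_t-\xi_t$ with $g_t\in\partial f(x_t)$ and noise $\xi_t\in\mathbb R^d$, and $x_{t+1}=\arg\min_{x\in\mathcal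 X}\langle\hat g_t,x\rangle+\eta_t^{-1}B_\psi(x,x_t)$. $\mathcal F_t$ is the $\sigma$-algebra generated by $\xi_1,\dots,\xi_t$ ($\mathcal F_0$ trivial), so $x_t$ and $g_t$ are $\mathcal F_{t-1}$-measurable; $\mathbb E_t[\cdot]=\mathbb E[\cdot\mid\mathcal F_{t-1}]$, and $\mathbb E_t[\xi_t]=0$. Assumption 2: $\|g\|_*\le G$ for all $x\in\mathcal X$, $g\in\partial f(x)$. Assumption 3: $\mathbb E_t\|\xi_t\|_*^2\le\sigma^2$ for all $t$. *)

From HB Require Import structures.
From mathcomp Require Import all_boot all_order all_algebra.
From mathcomp Require Import all_classical all_reals all_analysis.
Set Implicit Arguments. Unset Strict Implicit. Unset Printing Implicit Defensive.
Import Order.TTheory GRing.Theory Num.Theory.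
Import numFieldNormedType.Exports.
Local Open Scope classical_set_scope.
Local Open Scope ring_scope.

Section Geometry.
Variables (R : realType) (d : nat).
Local Notation V := 'rV[R]_d.

Definition ip (x y : V) : R := \sum_(i < d) x ord0 i * y ord0 i.

Definition norm2 (x : V) : R := Num.sqrt (ip x x).

Definition is_norm (nrm : V -> R) : Prop :=
  [/\ forall x, nrm x = 0 -> x = 0,
      forall (a : R) x, nrm (a *: x) = `|a| * nrm x &
      forall x y, nrm (x + y) <= nrm x + nrm y].

Definition dual_norm (nrm : V -> R) (y : V) : R :=
  sup [set ip y w | w in [set w | nrm w <= 1]].

Definition convex_set (X : set V) : Prop :=
  forall x y (l : R), X x -> X y -> 0 <= l <= 1 -> X (l *: x + (1 - l) *: y).

(** f : X -> R is convex (values of f outside X are irrelevant). *)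
Definition convex_on (X : set V) (f : V -> R) : Prop :=
  forall x y (l : R), X x -> X y -> 0 <= l <= 1 ->
    f (l *: x + (1 - l) *: y) <= l * f x + (1 - l) * f y.

Definition subdiff (X : set V) (f : V -> R) (x : V) : set V :=
  [set g | forall z, X z -> f x + ip g (z - x) <= f z].

Definition edom (psi : V -> \bar R) : set V := [set x | (psi x < +oo)%E].

Definition psir (psi : V -> \bar R) (x : V) : R := fine (psi x).

Definition esubdiff (psi : V -> \bar R) (y : V) : set V :=
  [set g | forall z, (psi y + (ip (z - y)%R g)%:E <= psi z)%E].

(** Gradient of psi at y (meaningful at points of int dom psi, where psi is
    real-valued near y and differentiable). *)
Definition grad (psi : V -> \bar R) (y : V) : V :=
  \row_i ('d (psir psi) y (delta_mx ord0 i : V)).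

Definition bregman (psi : V -> \bar R) (x y : V) : R :=
  psir psi x - psir psi y - ip (x - y) (grad psi y).

Definition assumption1 (nrm : V -> R) (X : set V) (psi : V -> \bar R) : Prop :=
  (forall x, psi x != -oo%E) /\
  closed [set p : V * R | (psi p.1 <= p.2%:E)%E] /\
  (forall (x y : V) (l : R), 0 <= l <= 1 ->
     (psi (l *: x + (1 - l) *: y)%R <= l%:E * psi x + (1 - l)%:E * psi y)%E) /\
  interior (edom psi) !=set0 /\
  (forall y, interior (edom psi) y -> differentiable (psir psi) y) /\
  (forall x y g, edom psi x -> edom psi y -> esubdiff psi y g ->
     psir psi y + ip (x - y) g + 2^-1 * nrm (x - y) ^+ 2 <= psir psi x) /\
  X `<=` edom psi /\
  ((forall (y : nat -> V) (b : V), (forall k, interior (edom psi) (y k)) ->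
      y @ \oo --> b -> (closure (edom psi) `\` interior (edom psi)) b ->
      (fun k => norm2 (grad psi (y k))) @ \oo --> +oo)
   \/ X `<=` interior (edom psi)).

End Geometry.

Section Probability.
Variables (R : realType) (d : nat) (dT : measure_display) (Omega : measurableType dT).
Local Notation V := 'rV[R]_d.

(** F_t = sigma(xi_1, ..., xi_t), as a family of subsets of Omega
    (F_0 is the trivial sigma-algebra). *)
Definition gen_sigma (xi : nat -> Omega -> V) (t : nat) : set (set Omega) :=
  <<s [set A | exists s (i : 'I_d) (B : set R),
          [/\ (1 <= s <= t)%N, measurable B &
              A = (fun w => xi s w ord0 i) @^-1` B]] >>.

Definition Fmeas (F : set (set Omega)) (Z : Omega -> R) : Prop :=
  forall B : set R, measurable B -> F (Z @^-1` B).

Definition Fmeas_vec (F : set (set Omega)) (Z : Omega -> V) : Prop :=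
  forall i : 'I_d, Fmeas F (fun w => Z w ord0 i).

Definition cexp_version (P : probability Omega R) (F : set (set Omega))
    (Y Z : Omega -> R) : Prop :=
  Fmeas F Z /\
  forall A, F A -> (\int[P]_(w in A) (Z w)%:E = \int[P]_(w in A) (Y w)%:E)%E.

End Probability.

Section SMD.
Variables (R : realType) (d : nat) (dT : measure_display) (Omega : measurableType dT).
Local Notation V := 'rV[R]_d.

Definition smd_gamma (eta : nat -> R) (G sigma Y2 : R) (T : nat) : R :=
  Num.sqrt (Y2 + \sum_(1 <= t < T.+1) eta t ^+ 2 * (G ^+ 2 + sigma ^+ 2)).

Definition smd_D (psi : V -> \bar R) (x : nat -> Omega -> V) (xstar : V)
    (gamma : R) (t : nat) (w : Omega) : R :=
  \big[Num.max/gamma]_(1 <= s < t.+1) Num.sqrt (bregman psi xstar (x s w)).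

Definition avg_iterate (x : nat -> Omega -> V) (T : nat) (w : Omega) : V :=
  (T%:R)^-1 *: \sum_(1 <= t < T.+1) x t w.

End SMD.

(* The bound holds pathwise outside the two exceptional events and the null
   set where E_t ||xi_t||_*^2 > sigma^2.  Along a good path, with B_t = B_psi(x*, x_t), the mirror
   step and strong convexity of psi give
     eta_t [f x_t - f*] + B_(t+1) - B_t
       <= eta_t <xi_t, x_t - x*> + eta_t^2 (G^2 + ||xi_t||_*^2).
   Dividing by the running maximum D_t >= gamma (non-decreasing in t) makes the
   left side telescope, so B_(s+1) / D_s <= K := sqrt B_1 + gamma + sqrt 2 Y1;
   by induction D_t <= K for every t <= T, and then
   sum_t eta_t [f x_t - f*] <= K^2 <= 3 (B_1 + gamma^2 + 2 Y1^2).  Jensen's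
   inequality and eta_t >= eta_T turn this into the bound on the average. *)

From HB Require Import structures.
From mathcomp Require Import all_boot all_order all_algebra.
From mathcomp Require Import all_classical all_reals all_analysis.
From mathcomp Require Import ring lra.
Import Order.TTheory GRing.Theory Num.Theory.
Import numFieldNormedType.Exports.
Local Open Scope classical_set_scope.
Local Open Scope ring_scope.
Set Implicit Arguments. Unset Strict Implicit.

Section InnerProduct.
Variables (R : realType) (d : nat).
Implicit Types (a b c : 'rV[R]_d) (k : R).

Lemma ipDl a b c : ip (a + b) c = ip a c + ip b c.
Proof. by rewrite /ip -big_split; apply: eq_bigr => i _; rewrite mxE mulrDl. Qed.

Lemma ipDr a b c : ip c (a + b) = ip c a + ip c b.
Proof. by rewrite /ip -big_split; apply: eq_bigr => i _; rewrite mxE mulrDr. Qed.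

Lemma ipZl k a c : ip (k *: a) c = k * ip a c.
Proof. by rewrite /ip mulr_sumr; apply: eq_bigr => i _; rewrite mxE mulrA. Qed.

Lemma ipZr k a c : ip c (k *: a) = k * ip c a.
Proof. by rewrite /ip mulr_sumr; apply: eq_bigr => i _; rewrite mxE mulrCA. Qed.

Lemma ipNl a c : ip (- a) c = - ip a c.
Proof. by rewrite -scaleN1r ipZl mulN1r. Qed.

Lemma ipNr a c : ip c (- a) = - ip c a.
Proof. by rewrite -scaleN1r ipZr mulN1r. Qed.

Lemma ipBl a b c : ip (a - b) c = ip a c - ip b c.
Proof. by rewrite ipDl ipNl. Qed.

Lemma ipBr a b c : ip c (a - b) = ip c a - ip c b.
Proof. by rewrite ipDr ipNr. Qed.

Lemma ipC a c : ip a c = ip c a.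
Proof. by apply: eq_bigr => i _; rewrite mulrC. Qed.

Lemma ip0r c : ip c 0 = 0.
Proof. by rewrite -(scale0r 0) ipZr mul0r. Qed.

Lemma entry_le_mx_norm a i : `|a ord0 i| <= `|a|.
Proof.
rewrite [`|a|]mx_normrE.
exact: (@le_bigmax _ _ _ 0 (fun ij : 'I_1 * 'I_d => `|a ij.1 ij.2|) (ord0, i)).
Qed.

Lemma ip_le_mx_norm a c : ip a c <= (\sum_i `|a ord0 i|) * `|c|.
Proof.
rewrite /ip mulr_suml; apply: ler_sum => i _.
by apply: le_trans (ler_norm _) _; rewrite normrM ler_wpM2l ?entry_le_mx_norm.
Qed.

End InnerProduct.

Section Norm.
Variables (R : realType) (d : nat) (nrm : 'rV[R]_d -> R).
Hypothesis nrmP : is_norm nrm.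

Lemma nrm0 : nrm 0 = 0.
Proof. by case: nrmP => _ nrmZ _; rewrite -(scale0r 0) nrmZ normr0 mul0r. Qed.

Lemma nrmN x : nrm (- x) = nrm x.
Proof. by case: nrmP => _ nrmZ _; rewrite -scaleN1r nrmZ normrN normr1 mul1r. Qed.

Lemma nrm_ge0 x : 0 <= nrm x.
Proof.
case: nrmP => _ _ nrmD; have := nrmD x (- x).
by rewrite subrr nrm0 nrmN -mulr2n pmulrn_lge0.
Qed.

Lemma nrm_gt0 x : x != 0 -> 0 < nrm x.
Proof.
move=> x0; rewrite lt_def nrm_ge0 andbT; apply: contra x0 => /eqP.
by case: nrmP => nrm_eq0 _ _ /nrm_eq0 ->.
Qed.

Lemma nrm_le_mx_norm x :
  nrm x <= (\sum_(i < d) nrm (delta_mx ord0 i : 'rV[R]_d)) * `|x|.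
Proof.
case: nrmP => _ nrmZ nrmD.
rewrite {1}(row_sum_delta x) mulr_suml.
elim/big_ind2: _ => [|u a v b ? ?|i _]; first by rewrite nrm0.
  by apply: le_trans (nrmD _ _) _; apply: lerD.
by rewrite nrmZ mulrC ler_wpM2l ?nrm_ge0 ?entry_le_mx_norm.
Qed.

Lemma nrm_continuous : continuous nrm.
Proof.
move=> x; apply/(@cvgrPdist_lt _ _ _ (nbhs x) (@nbhs_filter _ x)) => e e0.
set C := \sum_(i < d) nrm (delta_mx ord0 i : 'rV[R]_d).
have C1 : 0 < C + 1 by rewrite ltr_wpDl ?sumr_ge0// => i _; apply: nrm_ge0.
have : \forall y \near x, `|x - y| < e / (C + 1).
  apply: (@cvgr_dist_lt _ _ _ (nbhs x) (@nbhs_filter _ x) id x cvg_id).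
  by rewrite divr_gt0.
apply: filterS => y xy.
have Cxy : C * `|x - y| < e.
  apply: le_lt_trans (_ : (C + 1) * `|x - y| < e); first by rewrite ler_wpM2r ?lerDl.
  by rewrite mulrC -ltr_pdivlMr.
case: nrmP => _ _ nrmD.
have x_le : nrm x <= nrm y + nrm (x - y) by rewrite -{1}(subrK y x) addrC nrmD.
have y_le : nrm y <= nrm x + nrm (x - y).
  by rewrite -[x - y]opprB nrmN -{1}(subrK x y) addrC nrmD.
have := nrm_le_mx_norm (x - y).
by rewrite -/C ltr_norml => ?; apply/andP; split; lra.
Qed.

End Norm.

Lemma nrm_lower_bound (R : realType) (n : nat) (nrm : 'rV[R]_n -> R) : is_norm nrm ->
  exists2 m : R, 0 < m & forall w, m * `|w| <= nrm w.
Proof.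
case: n nrm => [|k] nrm nrmP.
  by exists 1 => // w; rewrite (_ : w = 0) ?normr0 ?mulr0 ?nrm0 //; apply/rowP => -[].
pose S := [set w : 'rV[R]_k.+1 | `|w| = 1].
have e_neq0 : (delta_mx ord0 ord0 : 'rV[R]_k.+1) != 0.
  by apply/eqP => /rowP /(_ ord0) /eqP; rewrite !mxE !eqxx oner_eq0.
have S0 : S !=set0.
  exists (`|delta_mx ord0 ord0 : 'rV[R]_k.+1|^-1 *: delta_mx ord0 ord0).
  by rewrite /S /= normrZ normrV ?unitfE ?normr_eq0 // normr_id mulVf ?normr_eq0.
have Scompact : compact S.
  apply: bounded_closed_compact.
    by exists 1; split; [exact: num_real | move=> M M1 x /= ->; exact: ltW].
  apply: (@preimage_closed _ _ (fun w : 'rV[R]_k.+1 => `|w|) [set 1]).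
    by move=> x _; apply: norm_continuous.
  exact: closed_eq.
have [c /set_mem Sc cmin] :=
  EVT_min_rV S0 Scompact (continuous_subspaceT (nrm_continuous nrmP)).
have c_neq0 : c != 0 by apply: contra_eq_neq Sc => ->; rewrite normr0 eq_sym oner_neq0.
exists (nrm c) => [|w]; first exact: nrm_gt0.
have [->|w0] := eqVneq w 0; first by rewrite normr0 mulr0 nrm0.
have w_gt0 : 0 < `|w| by rewrite normr_gt0.
have /cmin : `|w|^-1 *: w \in S.
  by rewrite inE /S /= normrZ normrV ?unitfE ?gt_eqF // normr_id mulVf ?gt_eqF.
case: nrmP => _ nrmZ _.
by rewrite nrmZ normrV ?unitfE ?gt_eqF // normr_id -ler_pdivlMr // mulrC.
Qed.

Section DualNorm.
Variables (R : realType) (d : nat) (nrm : 'rV[R]_d -> R).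
Hypothesis nrmP : is_norm nrm.

Lemma dual_norm_has_sup y : has_sup [set ip y w | w in [set w | nrm w <= 1]].
Proof.
split; first by exists (ip y 0), 0 => //=; rewrite nrm0.
have [m m0 hm] := nrm_lower_bound nrmP.
exists ((\sum_i `|y ord0 i|) / m) => _ [w /= w1 <-].
apply: le_trans (ip_le_mx_norm y w) _.
rewrite ler_wpM2l ?sumr_ge0 // -[m^-1]mul1r ler_pdivlMr // mulrC.
exact: le_trans (hm w) w1.
Qed.

Lemma ip_le_dual_norm y w : ip y w <= dual_norm nrm y * nrm w.
Proof.
have [->|w0] := eqVneq w 0; first by rewrite ip0r nrm0 // mulr0.
have w_gt0 := nrm_gt0 nrmP w0.
have : ip y ((nrm w)^-1 *: w) <= dual_norm nrm y.
  apply: sup_upper_bound; first exact: dual_norm_has_sup.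
  exists ((nrm w)^-1 *: w) => //=.
  by case: nrmP => _ nrmZ _; rewrite nrmZ gtr0_norm ?invr_gt0 // mulVf ?gt_eqF.
by rewrite ipZr -ler_pdivlMl ?invr_gt0 // invrK mulrC.
Qed.

End DualNorm.

Section Differential.
Variables (R : realType) (d : nat) (F : 'rV[R]_d -> R) (y v : 'rV[R]_d).
Hypothesis dF : differentiable F y.

Lemma diff_quotient_cvg :
  (fun h : R => h^-1 *: (F (h *: v + y) - F y)) @ 0^'+ --> 'd F y v.
Proof.
rewrite -deriveE //.
have right_to_punctured : ((0:R)^'+ : set_system R) --> (0:R)^'.
  move=> A; rewrite /at_right /within.
  by apply: (@filterS _ (nbhs (0:R))) => h Ah h0; apply: Ah; rewrite gt_eqF.
exact: cvg_trans (cvg_app _ right_to_punctured) (diff_derivable dF).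
Qed.

Lemma diff_le_of_quotient c :
  (forall h, 0 < h <= 1 -> h^-1 * (F (h *: v + y) - F y) <= c) -> 'd F y v <= c.
Proof.
move=> hc.
apply: (@cvgr_to_le _ _ (at_right_proper_filter 0) _ _ _ c diff_quotient_cvg).
near=> h.
by apply: hc; apply/andP; split; near: h; [exact: nbhs_right_gt | exact: nbhs_right_le].
Unshelve. all: by end_near.
Qed.

Lemma diff_ge_of_quotient c :
  (forall h, 0 < h <= 1 -> c <= h^-1 * (F (h *: v + y) - F y)) -> c <= 'd F y v.
Proof.
move=> hc.
apply: (@cvgr_to_ge _ _ (at_right_proper_filter 0) _ _ _ c diff_quotient_cvg).
near=> h.
by apply: hc; apply/andP; split; near: h; [exact: nbhs_right_gt | exact: nbhs_right_le].
Unshelve. all: by end_near.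
Qed.

End Differential.

Lemma ip_grad (R : realType) (d : nat) (psi : 'rV[R]_d -> \bar R) y v :
  ip v (grad psi y) = 'd (psir psi) y v.
Proof.
rewrite {2}(row_sum_delta v) linear_sum; apply: eq_bigr => i _.
by rewrite linearZ mxE.
Qed.

(* Unification and kernel conversion would otherwise unfold the differential
   inside [grad] and blow up; for the same reason the proofs below abstract
   gradient and Bregman terms before calling ring or lra. *)
Opaque grad.

Lemma convex_set_comb (R : realType) (d : nat) (X : set 'rV[R]_d) x y (l : R) :
  convex_set X -> X x -> X y -> 0 <= l <= 1 -> X (l *: x + (1 - l) *: y).
Proof.
move=> cX Xx Xy /andP[l0 l1].
by have /set_mem := cX x y (Itv01 l0 l1) (mem_set Xx) (mem_set Xy).
Qed.

Section Regularizer.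
Variables (R : realType) (d : nat) (nrm : 'rV[R]_d -> R) (psi : 'rV[R]_d -> \bar R).
Local Notation V := 'rV[R]_d.
Hypothesis psi_neq_ninfty : forall x, psi x != -oo%E.
Hypothesis psi_convex : forall (x y : V) (l : R), 0 <= l <= 1 ->
  (psi (l *: x + (1 - l) *: y) <= l%:E * psi x + (1 - l)%:E * psi y)%E.
Hypothesis psi_diff : forall y, interior (edom psi) y -> differentiable (psir psi) y.
Hypothesis psi_strong : forall x y g, edom psi x -> edom psi y -> esubdiff psi y g ->
  psir psi y + ip (x - y) g + 2^-1 * nrm (x - y) ^+ 2 <= psir psi x.

Lemma psi_fin x : edom psi x -> psi x = (psir psi x)%:E.
Proof. by rewrite /edom /psir /=; have := psi_neq_ninfty x; case: (psi x). Qed.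

Lemma grad_esubdiff y : interior (edom psi) y -> esubdiff psi y (grad psi y).
Proof.
move=> iy z; have ey : edom psi y := interior_subset iy.
have [ez|nez] := pselect (edom psi z); last first.
  suff -> : psi z = +oo%E by exact: leey.
  move: nez; rewrite /edom /=; have := psi_neq_ninfty z.
  by case: (psi z) => // r _ []; exact: ltry.
rewrite (psi_fin ey) (psi_fin ez) -EFinD lee_fin ip_grad -lerBrDl.
apply: diff_le_of_quotient; first exact: psi_diff.
move=> h /andP[h0 h1]; have := psi_convex z y (l:=h) (ltac:(by rewrite (ltW h0) h1)).
have -> : h *: (z - y) + y = h *: z + (1 - h) *: y by apply/rowP => i; rewrite !mxE; ring.
rewrite (psi_fin ey) (psi_fin ez) -!EFinM -EFinD => hw.
have ew : edom psi (h *: z + (1 - h) *: y) by apply: le_lt_trans hw _; exact: ltry.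
by move: hw; rewrite (psi_fin ew) lee_fin ler_pdivrMl //; lra.
Qed.

Lemma bregman_ge_half_sqr x y : edom psi x -> interior (edom psi) y ->
  2^-1 * nrm (x - y) ^+ 2 <= bregman psi x y.
Proof.
move=> ex iy; have := psi_strong ex (interior_subset iy) (grad_esubdiff iy).
by rewrite /bregman; lra.
Qed.

Lemma bregman_three_point x y z :
  ip (z - x) (grad psi x) - ip (z - x) (grad psi y)
  = bregman psi z y - bregman psi z x - bregman psi x y.
Proof.
rewrite /bregman; move: (grad psi x) (grad psi y) => gx gy.
by rewrite !ipBl; ring.
Qed.

Lemma directional_optimality (a v y : V) : interior (edom psi) y ->
  (forall h, 0 < h <= 1 ->
     ip a y + psir psi y <= ip a (h *: v + y) + psir psi (h *: v + y)) ->
  0 <= ip a v + ip v (grad psi y).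
Proof.
move=> iy hmin; rewrite ip_grad -lerBlDl sub0r.
apply: diff_ge_of_quotient; first exact: psi_diff.
move=> h /andP[h0 h1]; have := hmin h (ltac:(by rewrite h0 h1)).
by rewrite ipDr ipZr ler_pdivlMl //; lra.
Qed.

Section MirrorStep.
Variables (X : set V) (eta : R) (gh y y' : V).
Hypotheses (cX : convex_set X) (eta_gt0 : 0 < eta) (Xy' : X y').
Hypotheses (iy : interior (edom psi) y) (iy' : interior (edom psi) y').
Hypothesis y'_min : forall z, X z ->
  ip gh y' + eta^-1 * bregman psi y' y <= ip gh z + eta^-1 * bregman psi z y.

Lemma mirror_step_optimality z : X z ->
  0 <= eta * ip gh (z - y') + ip (z - y') (grad psi y') - ip (z - y') (grad psi y).
Proof.
move=> Xz; pose a : V := eta *: gh - grad psi y.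
have segment_min (h : R) : 0 < h <= 1 ->
    ip a y' + psir psi y' <= ip a (h *: (z - y') + y') + psir psi (h *: (z - y') + y').
  move=> /andP[h0 h1].
  have Xw : X (h *: (z - y') + y').
    have -> : h *: (z - y') + y' = h *: z + (1 - h) *: y'.
      by apply/rowP => i; rewrite !mxE; ring.
    by apply: convex_set_comb => //; rewrite ltW.
  have := y'_min Xw; rewrite /a /bregman.
  move: (h *: (z - y') + y') (grad psi y) => w gy.
  rewrite -(ler_pM2l eta_gt0) !mulrDr !mulrA mulfV ?gt_eqF // !mul1r.
  by rewrite !ipBl !ipZl (ipC gy y') (ipC gy w); lra.
have := directional_optimality iy' segment_min; rewrite /a.
move: (grad psi y) (grad psi y') => gy gy'.
by rewrite [ip (_ - gy) _]ipBl ipZl (ipC gy); lra.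
Qed.

Lemma mirror_step_descent (xs : V) (L : R) : is_norm nrm -> X xs ->
  (forall u, ip gh u <= L * nrm u) ->
  eta * ip gh (y - xs) <= bregman psi xs y - bregman psi xs y' + (eta * L) ^+ 2 / 2.
Proof.
move=> nrmP Xxs gh_le.
have := mirror_step_optimality Xxs; rewrite -addrA bregman_three_point => opt.
have := bregman_ge_half_sqr (interior_subset iy') iy.
rewrite -opprB nrmN //; set n := nrm (y - y') => strong.
have lip : eta * ip gh (y - y') <= eta * (L * n) by rewrite ler_pM2l.
have young : eta * (L * n) - n ^+ 2 / 2 <= (eta * L) ^+ 2 / 2.
  by rewrite -subr_ge0 (_ : _ - _ = (eta * L - n) ^+ 2 / 2) ?divr_ge0 ?sqr_ge0 //; field.
have -> : ip gh (y - xs) = ip gh (y - y') - ip gh (xs - y') by rewrite !ipBr; ring.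
move: opt strong; rewrite mulrBr.
by move: (bregman psi xs y) (bregman psi xs y') (bregman psi y' y) => ? ? ?; lra.
Qed.

End MirrorStep.

End Regularizer.

Definition runmax (R : realDomainType) (m0 : R) (u : nat -> R) (t : nat) : R :=
  \big[Num.max/m0]_(1 <= s < t.+1) u s.

Section RunningMax.
Variables (R : realDomainType) (m0 : R) (u : nat -> R).

Lemma runmax_ge_init t : m0 <= runmax m0 u t.
Proof. exact: bigmax_ge_id. Qed.

Lemma runmax_ge s t : (1 <= s <= t)%N -> u s <= runmax m0 u t.
Proof. by move=> st; apply: le_bigmax_seq; rewrite // mem_index_iota ltnS. Qed.

Lemma runmax_le t K : m0 <= K -> (forall s, (1 <= s <= t)%N -> u s <= K) ->
  runmax m0 u t <= K.
Proof.
move=> m0K uK; rewrite /runmax big_nat_cond; apply: bigmax_le => // s.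
by rewrite andbT => /andP[s1 st]; apply: uK; rewrite s1 -ltnS.
Qed.

Lemma runmax_le_succ t : runmax m0 u t <= runmax m0 u t.+1.
Proof.
apply: runmax_le; first exact: runmax_ge_init.
by move=> s /andP[s1 st]; apply: runmax_ge; rewrite s1 leqW.
Qed.

End RunningMax.

Section Bootstrap.
Variables (R : rcfType) (T : nat) (B e c a : nat -> R) (gam Y1 : R).
Hypotheses (gam_gt0 : 0 < gam) (Y1_ge0 : 0 <= Y1).
Hypothesis B_ge0 : forall t, (1 <= t)%N -> 0 <= B t.
Hypothesis e_ge0 : forall t, (1 <= t)%N -> 0 <= e t.
Hypothesis c_ge0 : forall t, (1 <= t)%N -> 0 <= c t.
Local Notation D := (runmax gam (fun s => Num.sqrt (B s))).
Hypothesis step : forall t, (1 <= t <= T)%N ->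
  e t + B t.+1 - B t <= Num.sqrt 2 * D t * a t + c t.
Hypothesis c_sum : \sum_(1 <= t < T.+1) c t <= gam ^+ 2.
Hypothesis a_partial_sum : forall s, (1 <= s <= T)%N -> \sum_(1 <= t < s.+1) a t <= Y1.

Let K := Num.sqrt (B 1%N) + gam + Num.sqrt 2 * Y1.

Let D_gt0 t : 0 < D t.
Proof. exact: lt_le_trans gam_gt0 (runmax_ge_init _ _ _). Qed.

Let sum_eD_ge0 s : 0 <= \sum_(1 <= t < s.+1) e t / D t.
Proof.
rewrite big_nat_cond; apply: sumr_ge0 => t /andP[/andP[t1 _] _].
by rewrite divr_ge0 ?e_ge0 ?ltW.
Qed.

Let normalized_step t : (1 <= t <= T)%N ->
  (B t.+1 - B t) / D t + e t / D t <= Num.sqrt 2 * a t + c t / gam.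
Proof.
move=> tT; have /andP[t1 _] := tT.
have cD : c t <= c t / gam * D t.
  by rewrite mulrAC -mulrA ler_peMr ?c_ge0 // ler_pdivlMr // mul1r runmax_ge_init.
rewrite -mulrDl ler_pdivrMr // mulrDl; have := step tT; lra.
Qed.

Let normalized_telescope s : (1 <= s <= T)%N ->
  B s.+1 / D s + \sum_(1 <= t < s.+1) e t / D t
  <= B 1%N / D 1%N + Num.sqrt 2 * \sum_(1 <= t < s.+1) a t
     + (\sum_(1 <= t < s.+1) c t) / gam.
Proof.
elim: s => [//|s IH] /andP[_ sT].
have [s0|s0] := eqVneq s 0%N.
  by subst s; rewrite !big_nat1; have := @normalized_step 1%N sT; lra.
have s1 : (1 <= s)%N by rewrite lt0n.
have := IH; rewrite s1 ltnW // => /(_ isT) IHs.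
have := normalized_step (t := s.+1); rewrite sT => /(_ isT).
have : B s.+1 / D s.+1 <= B s.+1 / D s.
  by rewrite ler_wpM2l ?B_ge0 // lef_pV2 ?posrE ?runmax_le_succ.
rewrite !(big_nat_recr s.+1) //= !mulrDr !mulrDl; lra.
Qed.

Let normalized_le_K s : (1 <= s <= T)%N ->
  B s.+1 / D s + \sum_(1 <= t < s.+1) e t / D t <= K.
Proof.
move=> sT; apply: le_trans (normalized_telescope sT) _.
have B1_le : B 1%N / D 1%N <= Num.sqrt (B 1%N).
  rewrite ler_pdivrMr // -{1}(sqr_sqrtr (B_ge0 (isT : (1 <= 1)%N))) expr2.
  by rewrite ler_wpM2l ?sqrtr_ge0 // (runmax_ge _ _ (isT : (1 <= 1 <= 1)%N)).
have c_le : (\sum_(1 <= t < s.+1) c t) / gam <= gam.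
  rewrite ler_pdivrMr // -expr2; apply: le_trans c_sum.
  case/andP: sT => _ sT; rewrite [leRHS](big_cat_nat _ (_ : s.+1 <= T.+1)%N) //=.
  rewrite lerDl big_nat_cond; apply: sumr_ge0 => t /andP[/andP[t1 _] _].
  by rewrite c_ge0 // (leq_trans _ t1).
have := ler_wpM2l (sqrtr_ge0 2) (a_partial_sum sT); rewrite /K; lra.
Qed.

Let sqrtB1_gam_le_K : Num.sqrt (B 1%N) + gam <= K.
Proof. by rewrite /K lerDl mulr_ge0 ?sqrtr_ge0. Qed.

Let gam_le_K : gam <= K.
Proof. by have := sqrtr_ge0 (B 1%N); have := sqrtB1_gam_le_K; lra. Qed.

Let sqrtB_le_K t : (t <= T)%N -> forall s, (1 <= s <= t.+1)%N -> Num.sqrt (B s) <= K.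
Proof.
elim: t => [_ s /andP[s1 s1']|t IH tT s /andP[s1 st]].
  have -> : s = 1%N by apply/eqP; rewrite eqn_leq s1' s1.
  by have := ltW gam_gt0; have := sqrtB1_gam_le_K; lra.
have [st'|st'] := leqP s t.+1; first by apply: IH; [exact: ltnW | rewrite s1 st'].
have -> : s = t.+2 by apply/eqP; rewrite eqn_leq st st'.
have Dt_le : D t.+1 <= K.
  by apply: runmax_le => // s' s't; apply: IH; [exact: ltnW | exact: s't].
have : B t.+2 / D t.+1 <= K.
  have := normalized_le_K (s := t.+1); rewrite tT => /(_ isT).
  by have := sum_eD_ge0 t.+1; lra.
rewrite ler_pdivrMr // => BK.
have K_ge0 : 0 <= K by apply: le_trans (ltW gam_gt0) gam_le_K.
rewrite -(ger0_norm K_ge0) -sqrtr_sqr ler_sqrt ?sqr_ge0 //.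
by apply: le_trans BK _; rewrite expr2 ler_wpM2l.
Qed.

Lemma bootstrap_sum_le : (1 <= T)%N ->
  \sum_(1 <= t < T.+1) e t <= (Num.sqrt (B 1%N) + gam + Num.sqrt 2 * Y1) ^+ 2.
Proof.
move=> T1; rewrite -/K.
have D_le_K t : (t <= T)%N -> D t <= K.
  move=> tT; apply: runmax_le => // s /andP[s1 st].
  by apply: (sqrtB_le_K tT); rewrite s1 leqW.
have sum_eD_le_K : \sum_(1 <= t < T.+1) e t / D t <= K.
  have := normalized_le_K (s := T); rewrite T1 leqnn => /(_ isT).
  have : 0 <= B T.+1 / D T by rewrite divr_ge0 ?B_ge0 ?ltW.
  lra.
apply: le_trans (_ : K * \sum_(1 <= t < T.+1) e t / D t <= _); last first.
  by rewrite expr2 ler_wpM2l // (le_trans (ltW gam_gt0) gam_le_K).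
rewrite mulr_sumr; apply: ler_sum_nat => t /andP[t1 tT].
rewrite -{1}(divfK (lt0r_neq0 (D_gt0 t)) (e t)) mulrC.
by apply: ler_wpM2r; [rewrite divr_ge0 ?e_ge0 ?ltW | apply: D_le_K; rewrite -ltnS].
Qed.

End Bootstrap.

Lemma convex_on_avg (R : realType) (d : nat) (X : set 'rV[R]_d) (f : 'rV[R]_d -> R)
    (x : nat -> 'rV[R]_d) (n : nat) :
  convex_set X -> convex_on X f -> (forall t, (1 <= t)%N -> X (x t)) -> (1 <= n)%N ->
  X (n%:R^-1 *: \sum_(1 <= t < n.+1) x t) /\
  f (n%:R^-1 *: \sum_(1 <= t < n.+1) x t) <= n%:R^-1 * \sum_(1 <= t < n.+1) f (x t).
Proof.
move=> cX cf Xx; elim: n => [//|n IH] _.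
have [->|n0] := eqVneq n 0%N.
  by rewrite !big_nat1 invr1 scale1r mul1r; split => //; apply: Xx.
have n_gt0 : (0 < n)%N by rewrite lt0n.
have [Xavg favg] := IH n_gt0.
pose l : R := n.+1%:R^-1.
have l01 : 0 <= l <= 1 by rewrite invr_ge0 ler0n invf_le1 ?ltr0n // ler1n.
have lE : (1 - l) * n%:R^-1 = l.
  rewrite /l -addn1 natrD; field.
  by rewrite natr1 !pnatr_eq0 n0.
have avgE : n.+1%:R^-1 *: \sum_(1 <= t < n.+2) x t
          = l *: x n.+1 + (1 - l) *: (n%:R^-1 *: \sum_(1 <= t < n.+1) x t).
  by rewrite scalerA lE big_nat_recr //= scalerDr addrC.
rewrite avgE; split; first by apply: convex_set_comb => //; apply: Xx.
apply: le_trans (cf _ _ _ (Xx n.+1 isT) Xavg l01) _.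
rewrite (big_nat_recr n.+1) //= mulrDr addrC -/l lerD2r.
apply: le_trans (ler_wpM2l _ favg) _; first by case/andP: l01; lra.
by rewrite mulrA lE.
Qed.

Lemma sqrrD3_le (R : realFieldType) (a b c : R) :
  (a + b + c) ^+ 2 <= 3 * (a ^+ 2 + b ^+ 2 + c ^+ 2).
Proof.
rewrite -subr_ge0 (_ : _ - _ = (a - b) ^+ 2 + (b - c) ^+ 2 + (a - c) ^+ 2); last by ring.
by rewrite !addr_ge0 ?sqr_ge0.
Qed.

Section SamplePath.
Variables (R : realType) (d : nat) (nrm : 'rV[R]_d -> R) (X : set 'rV[R]_d).
Variables (f : 'rV[R]_d -> R) (xstar : 'rV[R]_d) (psi : 'rV[R]_d -> \bar R).
Variables (G sigma Y1 Y2 : R) (eta : nat -> R) (T : nat).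
Variables (xi g x : nat -> 'rV[R]_d) (cxi : nat -> R).
Local Notation V := 'rV[R]_d.
Hypotheses (nrmP : is_norm nrm) (cX : convex_set X) (f_convex : convex_on X f).
Hypotheses (X_xstar : X xstar) (xstar_min : forall z, X z -> f xstar <= f z).
Hypothesis psi_neq_ninfty : forall x, psi x != -oo%E.
Hypothesis psi_convex : forall (x y : V) (l : R), 0 <= l <= 1 ->
  (psi (l *: x + (1 - l) *: y) <= l%:E * psi x + (1 - l)%:E * psi y)%E.
Hypothesis psi_diff : forall y, interior (edom psi) y -> differentiable (psir psi) y.
Hypothesis psi_strong : forall x y g, edom psi x -> edom psi y -> esubdiff psi y g ->
  psir psi y + ip (x - y) g + 2^-1 * nrm (x - y) ^+ 2 <= psir psi x.
Hypothesis X_sub_dom : X `<=` edom psi.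
Hypothesis G_bound : forall z gz, X z -> subdiff X f z gz -> dual_norm nrm gz <= G.
Hypothesis eta_gt0 : forall t, (1 <= t)%N -> 0 < eta t.
Hypothesis eta_noninc : forall s t, (1 <= s <= t)%N -> eta t <= eta s.
Hypothesis X_x1 : X (x 1%N).
Hypothesis x_int : forall t, (1 <= t)%N -> interior (edom psi) (x t).
Hypothesis g_subdiff : forall t, (1 <= t)%N -> subdiff X f (x t) (g t).
Hypothesis x_step : forall t, (1 <= t)%N -> X (x t.+1) /\
  forall z, X z -> ip (g t - xi t) (x t.+1) + (eta t)^-1 * bregman psi (x t.+1) (x t)
                   <= ip (g t - xi t) z + (eta t)^-1 * bregman psi z (x t).
Hypothesis cxi_le : forall t, (1 <= t)%N -> cxi t <= sigma ^+ 2.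
Hypotheses (T_ge1 : (1 <= T)%N) (Y1_ge0 : 0 <= Y1) (Y2_gt0 : 0 < Y2).

Let S := \sum_(1 <= t < T.+1) eta t ^+ 2 * (G ^+ 2 + sigma ^+ 2).
Let gam := smd_gamma eta G sigma Y2 T.
Let B t := bregman psi xstar (x t).
Let D := runmax gam (fun s => Num.sqrt (B s)).

Hypothesis noise_sum_le : forall s, (1 <= s <= T)%N ->
  \sum_(1 <= t < s.+1) eta t * ip (xi t) ((Num.sqrt 2 * D t)^-1 *: (x t - xstar)) <= Y1.
Hypothesis sqnoise_sum_le :
  \sum_(1 <= t < T.+1) eta t ^+ 2 * (dual_norm nrm (xi t) ^+ 2 - cxi t) <= Y2.

Let X_x t : (1 <= t)%N -> X (x t).
Proof.
case: t => [//|[_|t _]]; first exact: X_x1.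
by have [] := x_step (isT : (1 <= t.+1)%N).
Qed.

Let S_ge0 : 0 <= S.
Proof. by rewrite sumr_ge0 // => t _; rewrite mulr_ge0 ?addr_ge0 ?sqr_ge0. Qed.

Let gam_gt0 : 0 < gam.
Proof. by rewrite /gam /smd_gamma sqrtr_gt0 ltr_wpDr. Qed.

Let gam_sqr : gam ^+ 2 = Y2 + S.
Proof. by rewrite /gam /smd_gamma sqr_sqrtr // addr_ge0 // ltW. Qed.

Let B_ge0 t : (1 <= t)%N -> 0 <= B t.
Proof.
move=> t1; apply: le_trans (bregman_ge_half_sqr psi_neq_ninfty psi_convex psi_diff
  psi_strong (X_sub_dom X_xstar) (x_int t1)).
by rewrite mulr_ge0 ?sqr_ge0.
Qed.

Let one_step t : (1 <= t <= T)%N ->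
  eta t * (f (x t) - f xstar) + B t.+1 - B t
  <= Num.sqrt 2 * D t * (eta t * ip (xi t) ((Num.sqrt 2 * D t)^-1 *: (x t - xstar)))
     + eta t ^+ 2 * (G ^+ 2 + dual_norm nrm (xi t) ^+ 2).
Proof.
move=> /andP[t1 _]; set N := dual_norm nrm (xi t).
have [X_xt1 xt1_min] := x_step t1.
have gh_le u : ip (g t - xi t) u <= (G + N) * nrm u.
  rewrite ipBl -ipNr mulrDl lerD //.
    apply: le_trans (ip_le_dual_norm nrmP _ _) _.
    by rewrite ler_wpM2r ?nrm_ge0 // (G_bound (X_x t1) (g_subdiff t1)).
  by rewrite -(nrmN nrmP u) ip_le_dual_norm.
have := mirror_step_descent psi_neq_ninfty psi_convex psi_diff psi_strong cX
  (eta_gt0 t1) X_xt1 (x_int t1) (x_int (leqW t1)) xt1_min nrmP X_xstar gh_le.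
have f_le : f (x t) - f xstar <= ip (g t) (x t - xstar).
  by have := g_subdiff t1 X_xstar; rewrite -opprB ipNr; lra.
have young : (eta t * (G + N)) ^+ 2 / 2 <= eta t ^+ 2 * (G ^+ 2 + N ^+ 2).
  rewrite -subr_ge0 (_ : _ - _ = (eta t * (G - N)) ^+ 2 / 2) ?divr_ge0 ?sqr_ge0 //.
  by field.
have D_gt0 : 0 < D t by apply: lt_le_trans gam_gt0 (runmax_ge_init _ _ _).
have -> : Num.sqrt 2 * D t * (eta t * ip (xi t) ((Num.sqrt 2 * D t)^-1 *: (x t - xstar)))
          = eta t * ip (xi t) (x t - xstar).
  by rewrite ipZr; field; rewrite !gt_eqF ?sqrtr_gt0.
rewrite ipBl mulrBr.
have := ler_wpM2l (ltW (eta_gt0 t1)) f_le.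
rewrite /B; move: (bregman psi xstar (x t)) (bregman psi xstar (x t.+1)) => b b'.
lra.
Qed.

Lemma smd_sample_path_bound :
  f (T%:R^-1 *: \sum_(1 <= t < T.+1) x t) - f xstar
  <= 3 / (eta T * T%:R) * (B 1%N + S + 2 * Y1 ^+ 2 + Y2).
Proof.
pose e t := eta t * (f (x t) - f xstar).
pose c t := eta t ^+ 2 * (G ^+ 2 + dual_norm nrm (xi t) ^+ 2).
have gap_ge0 t : (1 <= t)%N -> 0 <= f (x t) - f xstar.
  by move=> t1; rewrite subr_ge0; apply/xstar_min/X_x.
have e_ge0 t : (1 <= t)%N -> 0 <= e t by move=> t1; rewrite mulr_ge0 ?gap_ge0 ?ltW ?eta_gt0.
have c_ge0 t : (1 <= t)%N -> 0 <= c t by move=> _; rewrite mulr_ge0 ?addr_ge0 ?sqr_ge0.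
have c_sum : \sum_(1 <= t < T.+1) c t <= gam ^+ 2.
  rewrite gam_sqr addrC; apply: le_trans (lerD (lexx S) sqnoise_sum_le).
  rewrite /S -big_split; apply: ler_sum_nat => t /andP[t1 _] /=.
  by rewrite -mulrDr ler_wpM2l ?sqr_ge0 //; have := cxi_le t1; lra.
have sum_e_le :=
  bootstrap_sum_le gam_gt0 Y1_ge0 B_ge0 e_ge0 c_ge0 one_step c_sum noise_sum_le T_ge1.
have [_ f_avg_le] := convex_on_avg cX f_convex X_x T_ge1.
have B1_ge0 := B_ge0 (isT : (1 <= 1)%N).
move: (B 1%N) B1_ge0 sum_e_le => b b_ge0 sum_e_le.
set P := b + S + 2 * Y1 ^+ 2 + Y2.
have sum_gap_le : \sum_(1 <= t < T.+1) (f (x t) - f xstar) <= 3 * P / eta T.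
  rewrite ler_pdivlMr ?eta_gt0 // mulrC mulr_sumr.
  apply: le_trans (_ : \sum_(1 <= t < T.+1) e t <= _).
    apply: ler_sum_nat => t /andP[t1 tT].
    by rewrite ler_wpM2r ?gap_ge0 // eta_noninc // t1 -ltnS.
  apply: le_trans sum_e_le _; apply: le_trans (sqrrD3_le _ _ _) _.
  by rewrite sqr_sqrtr // gam_sqr exprMn sqr_sqrtr // /P; lra.
rewrite sumrB sumr_const_nat subn1 /= -[f xstar *+ T]mulr_natl in sum_gap_le.
have T_gt0 : 0 < T%:R :> R by rewrite ltr0n.
have -> : 3 / (eta T * T%:R) * P = T%:R^-1 * (3 * P / eta T) by rewrite invfM; ring.
apply: le_trans (_ : T%:R^-1 * (\sum_(1 <= t < T.+1) f (x t) - T%:R * f xstar) <= _).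
  by rewrite mulrBr mulrA mulVf ?gt_eqF // mul1r lerD2r.
by rewrite ler_pM2l ?invr_gt0.
Qed.

End SamplePath.

Lemma probability_setC_setU3_ge (R : realType) (dT : measure_display)
    (Omega : measurableType dT) (P : probability Omega R) (A B N : set Omega) (a b : R) :
  measurable A -> measurable B -> measurable N ->
  (P A <= a%:E)%E -> (P B <= b%:E)%E -> P N = 0%E ->
  ((1 - (a + b))%:E <= P (~` (A `|` B `|` N)))%E.
Proof.
move=> mA mB mN PA PB PN.
have mAB : measurable (A `|` B) by apply: measurableU.
have PABN : (P (A `|` B `|` N) <= (a + b)%:E)%E.
  have PN_le0 : (P N <= 0)%E by rewrite PN.
  apply: le_trans (measureU2 P mAB mN) _; rewrite -[leRHS]adde0.
  apply: leeD PN_le0; apply: le_trans (measureU2 P mA mB) _.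
  by rewrite EFinD; apply: leeD.
rewrite probability_setC; last exact: measurableU.
have PABN_fin : P (A `|` B `|` N) \is a fin_num.
  by rewrite ge0_fin_numE // (le_lt_trans PABN) ?ltry.
by rewrite -(fineK PABN_fin) -EFinB lee_fin lerD2l lerN2 -lee_fin fineK.
Qed.

Unset Implicit Arguments.

Theorem theorem1 (R : realType) (d : nat)
    (nrm : 'rV[R]_d -> R) (X : set 'rV[R]_d) (f : 'rV[R]_d -> R)
    (xstar : 'rV[R]_d) (psi : 'rV[R]_d -> \bar R) (G sigma : R)
    (dT : measure_display) (Omega : measurableType dT) (P : probability Omega R)
    (eta : nat -> R) (x1 : 'rV[R]_d)
    (xi g x : nat -> Omega -> 'rV[R]_d) (cxi : nat -> Omega -> R)
    (T : nat) (delta Y1 Y2 : R) :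
  is_norm nrm ->
  X !=set0 -> closed X -> convex_set X ->
  convex_on X f -> X xstar -> (forall z, X z -> f xstar <= f z) ->
  (* Assumption 1 *)
  assumption1 nrm X psi ->
  (* Assumption 2 *)
  (forall z gz, X z -> subdiff X f z gz -> dual_norm nrm gz <= G) ->
  (forall t, (1 <= t)%N -> 0 < eta t) ->
  (forall s t, (1 <= s <= t)%N -> eta t <= eta s) ->
  (* E_t[xi_t] = 0 *)
  (forall t (i : 'I_d), measurable_fun setT (fun w => xi t w ord0 i)) ->
  (forall t (i : 'I_d), (1 <= t)%N ->
     P.-integrable setT (EFin \o (fun w => xi t w ord0 i)) /\
     cexp_version P (gen_sigma xi t.-1) (fun w => xi t w ord0 i) (fun _ => 0)) ->
  (* Assumption 3, with cxi t a version of E_t ||xi_t||_*^2 *)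
  (forall t, (1 <= t)%N ->
     cexp_version P (gen_sigma xi t.-1) (fun w => dual_norm nrm (xi t w) ^+ 2) (cxi t) /\
     {ae P, forall w, cxi t w <= sigma ^+ 2}) ->
  X x1 -> interior (edom psi) x1 ->
  (forall w, x 1%N w = x1) ->
  (forall t w, (1 <= t)%N -> interior (edom psi) (x t w)) ->
  (forall t, (1 <= t)%N -> Fmeas_vec (gen_sigma xi t.-1) (x t)) ->
  (forall t, (1 <= t)%N -> Fmeas_vec (gen_sigma xi t.-1) (g t)) ->
  (forall t w, (1 <= t)%N -> subdiff X f (x t w) (g t w)) ->
  (forall t w, (1 <= t)%N ->
     X (x t.+1 w) /\
     forall z, X z ->
       ip (g t w - xi t w) (x t.+1 w) + (eta t)^-1 * bregman psi (x t.+1 w) (x t w)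
       <= ip (g t w - xi t w) z + (eta t)^-1 * bregman psi z (x t w)) ->
  (1 <= T)%N -> 0 < delta < 1 -> 0 < Y1 -> 0 < Y2 ->
  (let gamma := smd_gamma eta G sigma Y2 T in
   exists B1 : set Omega, [/\ measurable B1,
     [set w | exists s, (1 <= s <= T)%N /\
        Y1 < \sum_(1 <= t < s.+1)
               eta t * ip (xi t w)
                 ((Num.sqrt 2 * smd_D psi x xstar gamma t w)^-1 *: (x t w - xstar))]
       `<=` B1 &
     (P B1 <= (delta / 2)%:E)%E]) ->
  (exists B2 : set Omega, [/\ measurable B2,
     [set w | Y2 < \sum_(1 <= t < T.+1)
                     eta t ^+ 2 * (dual_norm nrm (xi t w) ^+ 2 - cxi t w)] `<=` B2 &
     (P B2 <= (delta / 2)%:E)%E]) ->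
  exists A : set Omega, [/\ measurable A, ((1 - delta)%:E <= P A)%E &
    forall w, A w ->
      f (avg_iterate x T w) - f xstar
      <= 3 / (eta T * T%:R) *
         (bregman psi xstar x1 + \sum_(1 <= t < T.+1) eta t ^+ 2 * (G ^+ 2 + sigma ^+ 2)
          + 2 * Y1 ^+ 2 + Y2)].
Proof.
move=> nrmP _ _ cX f_convex X_xstar xstar_min
  [psi_neq_ninfty [_ [psi_convex [_ [psi_diff [psi_strong [X_sub_dom _]]]]]]]
  G_bound eta_gt0 eta_noninc _ _ cxi_cexp X_x1 _ x1E x_int _ _ g_subdiff x_step
  T_ge1 delta01 Y1_gt0 Y2_gt0 noise_tail sqnoise_tail.
have [B1 [mB1 noise_B1 PB1]] := noise_tail.
have [B2 [mB2 sqnoise_B2 PB2]] := sqnoise_tail.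
have [N [mN PN0 N_bad]] : {ae P, forall w t, (1 <= t)%N -> cxi t w <= sigma ^+ 2}.
  apply: ae_foralln => t; have [t1|t0] := leqP 1 t.
    by apply: filterS (cxi_cexp t t1).2 => w + _.
  exact: aeW.
exists (~` (B1 `|` B2 `|` N)); split.
- by apply: measurableC; apply: measurableU => //; apply: measurableU.
- rewrite (splitr delta).
  exact: probability_setC_setU3_ge.
move=> w /= good; rewrite /avg_iterate -(x1E w).
apply: (@smd_sample_path_bound R d nrm X f xstar psi G sigma Y1 Y2 eta T
  (fun t => xi t w) (fun t => g t w) (fun t => x t w) (fun t => cxi t w)) => //.
- by rewrite x1E.
- by move=> t; apply: x_int.
- by move=> t; apply: g_subdiff.
- by move=> t; apply: x_step.
- move=> t t1; apply: contrapT => bad; apply: good; right.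
  by apply: N_bad => /(_ t t1) /bad.
- exact: ltW.
- move=> s sT; rewrite leNgt; apply/negP => bad; apply: good; left; left.
  by apply: noise_B1; exists s.
- by rewrite leNgt; apply/negP => bad; apply: good; left; right; apply: sqnoise_B2.
Qed.
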